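(* Let $S$ be any $k$-uniform hypergraph on $n$ vertices with $m$ edges, and let $p=p(n)$ be such that $$\Pr\left[H\sim\mathcal H^k(n,p)\text{ contains a copy of }S\right]=1-o(1).$$ Then for every $\varepsilon\ge0$, letting $c=(1+\varepsilon)m$ and $q=\frac{cp}{\varepsilon m+1}$, if $q\le 1$ then $$\Pr\left[H\sim\mathcal H^k_c(n,q)\text{ contains a rainbow copy of }S\right]=1-o(1).$$
   Context: $\mathcal H^k(n,p)$ is the binomial random $k$-uniform hypergraph on $[n]$; $\mathcal H^k_c(n,q)$ is $\mathcal H^k(n,q)$ with each edge independently given a uniformly random color from $[c]$. A rainbow copy of $S$ is a copy of $S$ all of whose edges receive distinct colors. Asymptotics as $n\to\infty$. *)

From HB Require Import structures.
From mathcomp Require Import all_boot all_order all_algebra all_fingroup.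
From mathcomp Require Import all_classical all_reals all_analysis.
Set Implicit Arguments. Unset Strict Implicit. Unset Printing Implicit Defensive.
Import Order.TTheory GRing.Theory Num.Theory.
Local Open Scope ring_scope.

Definition ksets (n k : nat) : {set {set 'I_n}} := [set e : {set 'I_n} | #|e| == k].

Definition uniform (n k : nat) (S : {set {set 'I_n}}) : bool := S \subset ksets n k.

Definition has_copy (n : nat) (S H : {set {set 'I_n}}) : bool :=
  [exists f : {perm 'I_n}, [forall e in S, (f @: e) \in H]].

Definition binom_prob (R : realType) (n k : nat) (p : R)
    (P : {set {set 'I_n}} -> bool) : R :=
  \sum_(H : {set {set 'I_n}} | (H \subset ksets n k) && P H)
     p ^+ #|H| * (1 - p) ^+ (#|ksets n k| - #|H|)%N.

(* A coloured k-graph with colours in [c]: w e = None if e is not an edge,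
   w e = Some i if e is an edge of colour i; non-k-sets are never edges. *)
Definition colored_outcome (n c : nat) := {ffun {set 'I_n} -> option 'I_c}.

(* Pr[ H ~ H^k_c(n,q) satisfies P ]: each k-set independently is an edge with
   probability q, and each edge gets an independent uniform colour in [c]. *)
Definition colored_prob (R : realType) (n k c : nat) (q : R)
    (P : colored_outcome n c -> bool) : R :=
  \sum_(w : colored_outcome n c |
          [forall e, (e \notin ksets n k) ==> (w e == None)] && P w)
     \prod_(e in ksets n k) (if w e is Some _ then q / c%:R else 1 - q).

Definition has_rainbow_copy (n c : nat) (S : {set {set 'I_n}})
    (w : colored_outcome n c) : bool :=
  [exists f : {perm 'I_n},
     [forall e in S, w (f @: e) != None] &&
     [forall e1 in S, forall e2 in S, (w (f @: e1) == w (f @: e2)) ==> (e1 == e2)]].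

(* Reveal the k-sets one at a time and compare the two models step by step.
   The comparison is carried by a family of demands (A, U): all edges of A
   present, with distinct colours that avoid the spent set U, and
   |A| + |U| <= m; initially one demand f(S) for each relabelling f.  Revealing
   a k-set e gains, in the binomial model, p times the marginal probabilities of
   the demands through e.  In the coloured model e is an edge of colour x with
   probability q/c, and then every demand through e for which x is fresh
   survives as (A \ e, U + x).  By submodularity of covering probabilities each
   marginal gain is then earned with probability at least (q/c)(c - |U|), which
   is at least p because c - |U| >= c - m + 1 = eps m + 1. *)

From HB Require Import structures.
From mathcomp Require Import all_boot all_order all_algebra all_fingroup.
From mathcomp Require Import all_classical all_reals all_analysis.
From mathcomp Require Import lra zify ring.
Import Order.TTheory GRing.Theory Num.Theory numFieldNormedType.Exports.
Set Implicit Arguments. Unset Strict Implicit. Unset Printing Implicit Defensive.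
Local Open Scope classical_set_scope.
Local Open Scope ring_scope.

Section ProductExpectation.
Variables (R : realDomainType) (T X : finType) (rho : X -> R).
Implicit Types (l : seq T) (g w : {ffun T -> X}) (f : {ffun T -> X} -> R).

Definition fupd g (e : T) (x : X) : {ffun T -> X} :=
  [ffun y => if y == e then x else g y].

Fixpoint expect l g f : R :=
  if l is e :: l' then \sum_x rho x * expect l' (fupd g e x) f else f g.

Lemma eq_expect l g f f' :
  (forall w, (forall y, y \notin l -> w y = g y) -> f w = f' w) ->
  expect l g f = expect l g f'.
Proof.
elim: l g => [|e l IH] g /= eqf; first exact: eqf.
apply: eq_bigr => x _; congr (_ * _); apply: IH => w wg; apply: eqf => y.
by rewrite in_cons negb_or => /andP[ye yl]; rewrite wg // ffunE (negbTE ye).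
Qed.

Lemma expect_eq_start l g g' f :
  (forall w w', {in l, w =1 w'} -> (forall y, y \notin l -> w y = g y) ->
     (forall y, y \notin l -> w' y = g' y) -> f w = f w') ->
  expect l g f = expect l g' f.
Proof.
elim: l g g' => [|e l IH] g g' /= eqf; first by apply: eqf.
apply: eq_bigr => x _; congr (_ * _); apply: IH => w w' ww' wg w'g'; apply: eqf.
- move=> y; rewrite in_cons => /orP[/eqP->|]; last exact: ww'.
  have [el|el] := boolP (e \in l); first exact: ww'.
  by rewrite wg // w'g' // !ffunE eqxx.
- by move=> y; rewrite in_cons negb_or => /andP[ye yl]; rewrite wg // ffunE (negbTE ye).
- by move=> y; rewrite in_cons negb_or => /andP[ye yl]; rewrite w'g' // ffunE (negbTE ye).
Qed.

Lemma expectB l g f f' :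
  expect l g (fun w => f w - f' w) = expect l g f - expect l g f'.
Proof.
elim: l g => [|e l IH] g //=.
by rewrite -sumrB; apply: eq_bigr => x _; rewrite IH mulrBr.
Qed.

Lemma expect1 l g : \sum_x rho x = 1 -> expect l g (fun _ => 1) = 1.
Proof.
move=> rho1; elim: l g => [|e l IH] g //=.
by rewrite -[RHS]rho1; apply: eq_bigr => x _; rewrite IH mulr1.
Qed.

Lemma expectE l g f : uniq l ->
  expect l g f = \sum_(w : {ffun T -> X} | [forall y, (y \notin l) ==> (w y == g y)])
                    (\prod_(y <- l) rho (w y)) * f w.
Proof.
elim: l g => [|e l IH] g /=.
  move=> _; rewrite (big_pred1 g) ?big_nil ?mul1r // => w /=.
  by apply/forallP/eqP => [wg|-> //]; apply/ffunP => y; apply/eqP.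
case/andP=> el ul.
rewrite (partition_big (fun w : {ffun T -> X} => w e) predT) //=.
apply: eq_bigr => x _; rewrite IH // mulr_sumr.
apply: eq_big => [w|w /forallP wg]; last first.
  have /eqP we : w e == x by have := wg e; rewrite el /= ffunE eqxx.
  by rewrite big_cons we mulrA.
apply/forallP/andP => [wg|[/forallP wg /eqP we] y].
  split; last by have := wg e; rewrite el /= ffunE eqxx.
  apply/forallP => y; apply/implyP; rewrite in_cons negb_or => /andP[ye yl].
  by have := wg y; rewrite yl /= ffunE (negbTE ye).
apply/implyP => yl; rewrite ffunE; have [->|ye] := eqVneq y e; first by rewrite we.
by have := wg y; rewrite in_cons negb_or yl (negbTE ye).
Qed.

Hypothesis rho_ge0 : forall x, 0 <= rho x.

Lemma ler_expect l g f f' :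
  (forall w, (forall y, y \notin l -> w y = g y) -> f w <= f' w) ->
  expect l g f <= expect l g f'.
Proof.
elim: l g => [|e l IH] g /= lef; first exact: lef.
apply: ler_sum => x _; apply: ler_wpM2l => //; apply: IH => w wg; apply: lef => y.
by rewrite in_cons negb_or => /andP[ye yl]; rewrite wg // ffunE (negbTE ye).
Qed.

End ProductExpectation.

Lemma sum_option (R : nmodType) (X : finType) (F : option X -> R) :
  \sum_(o : option X) F o = F None + \sum_(x : X) F (Some x).
Proof.
rewrite (bigD1 None) //=; congr (_ + _).
rewrite (reindex_omap Some (fun o => o)) //=; last by case.
by apply: eq_bigl => j; rewrite eqxx.
Qed.

Lemma ler_nat_bool (R : numDomainType) (b b' : bool) : (b -> b') -> b%:R <= b'%:R :> R.
Proof. by case: b; case: b' => // /(_ isT). Qed.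

Section Coupling.
Variables (R : realFieldType) (T : finType) (c m : nat) (p q : R).
Hypotheses (p_ge0 : 0 <= p) (p_le1 : p <= 1) (q_ge0 : 0 <= q) (q_le1 : q <= 1).
Hypothesis (colour_total : c%:R * (q / c%:R) = q).
Hypothesis (p_le_fresh : forall j, (j < m)%N -> p <= q / c%:R * (c - j)%:R).

Local Notation pair := ({set T} * {set 'I_c})%type.
Implicit Types (l : seq T) (A : {set T}) (U : {set 'I_c}) (B : seq {set T}).
Implicit Types (F L : seq pair).

Definition pbin (b : bool) : R := if b then p else 1 - p.
Definition pcol (o : option 'I_c) : R := if o is Some _ then q / c%:R else 1 - q.

Lemma pbin_ge0 b : 0 <= pbin b.
Proof. by case: b; rewrite /= ?subr_ge0. Qed.

Lemma pcol_ge0 o : 0 <= pcol o.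
Proof. by case: o => [x|] /=; [apply: divr_ge0 | rewrite subr_ge0]. Qed.

Definition covers B (w : {ffun T -> bool}) : bool :=
  has (fun A => [forall y in A, w y]) B.

Definition rainbow_on (AU : pair) (w : {ffun T -> option 'I_c}) : bool :=
  [forall y in AU.1, if w y is Some x then x \notin AU.2 else false] &&
  [forall y1 in AU.1, forall y2 in AU.1, (w y1 == w y2) ==> (y1 == y2)].

Definition rainbow_covers F w : bool := has (rainbow_on ^~ w) F.

Definition Pcover l g B : R := expect pbin l g (fun w => (covers B w)%:R).
Definition Prainbow l g F : R := expect pcol l g (fun w => (rainbow_covers F w)%:R).

Definition subcover B B' := forall w, covers B w -> covers B' w.

Definition fresh (x : 'I_c) : pred pair := fun AU => x \notin AU.2.

Fixpoint extend (P : pred pair) B L : seq {set T} :=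
  if L is AU :: L' then extend P (if P AU then AU.1 :: B else B) L' else B.

Lemma covers_cons A B w : covers (A :: B) w = [forall y in A, w y] || covers B w.
Proof. by []. Qed.

Lemma covers_extend P B L w : covers (extend P B L) w =
  covers B w || has (fun AU : pair => P AU && [forall y in AU.1, w y]) L.
Proof.
elim: L B => [|AU L IH] B /=; first by rewrite orbF.
rewrite IH; case: (P AU); rewrite /= ?covers_cons //.
by case: [forall y in AU.1, w y]; case: (covers B w).
Qed.

Lemma extend_sub (Q : {set T} -> Prop) P B L : (forall A, A \in B -> Q A) ->
  (forall AU, AU \in L -> Q AU.1) -> forall A, A \in extend P B L -> Q A.
Proof.
elim: L B => [|AU L IH] B QB QL //=; apply: IH; last first.
  by move=> AU' AUL; apply: QL; rewrite in_cons AUL orbT.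
case: (P AU) => //.
by move=> A; rewrite in_cons => /orP[/eqP->|/QB//]; apply: QL; rewrite mem_head.
Qed.

Section Gain.
Variables (l : seq T) (g : {ffun T -> bool}).
Local Notation Q := (Pcover l g).

Lemma Pcover_mono B B' : subcover B B' -> Q B <= Q B'.
Proof.
move=> BB'; apply: ler_expect => [|w _]; first exact: pbin_ge0.
by apply: ler_nat_bool; apply: BB'.
Qed.

Lemma Pcover_submod A B B' : subcover B B' -> Q (A :: B') - Q B' <= Q (A :: B) - Q B.
Proof.
move=> BB'; rewrite /Pcover -!expectB; apply: ler_expect => [|w _]; first exact: pbin_ge0.
rewrite !covers_cons; have /implyP := BB' w.
case: [forall y in A, w y]; case: (covers B w); case: (covers B' w) => //= _;
  by rewrite ?subrr ?subr0 ?ler01.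
Qed.

(* The marginal gains of the sets [AU.1] with [P AU], each measured against all
   the sets of [L] added before it (whether or not they satisfy [P]). *)
Fixpoint gain (P : pred pair) B L : R :=
  if L is AU :: L' then
    (if P AU then Q (AU.1 :: B) - Q B else 0) + gain P (AU.1 :: B) L'
  else 0.

Lemma Pcover_extendT B L : Q (extend predT B L) = Q B + gain predT B L.
Proof. by elim: L B => [|AU L IH] B /=; [rewrite addr0 | rewrite IH; ring]. Qed.

Lemma gain_mono P B B' L : subcover B B' -> gain P B' L <= gain P B L.
Proof.
elim: L B B' => [|AU L IH] B B' BB' //=; apply: lerD.
  by case: (P AU) => //; apply: Pcover_submod.
by apply: IH => w; rewrite !covers_cons => /orP[->|/BB'->]; rewrite ?orbT.
Qed.

Lemma gain_extend P B L : Q B + gain P B L <= Q (extend P B L).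
Proof.
elim: L B => [|AU L IH] B /=; first by rewrite addr0.
case: (P AU).
  by apply: le_trans (IH _); rewrite addrA [Q B + _]addrC subrK.
rewrite add0r; apply: le_trans (IH _); rewrite lerD2l; apply: gain_mono.
by move=> w wB; rewrite covers_cons wB orbT.
Qed.

(* A gain that is counted with weight [p] on the left is counted on the right
   for each of the [c - #|AU.2|] colours [x] that are fresh for [AU]. *)
Lemma gain_split B L : (forall AU, AU \in L -> (#|AU.2| < m)%N) ->
  p * gain predT B L <= q / c%:R * \sum_(x : 'I_c) gain (fresh x) B L.
Proof.
elim: L B => [|AU L IH] B Lm /=; first by rewrite big1 ?mulr0.
rewrite big_split /= [p * (_ + _)]mulrDr [_ / _ * (_ + _)]mulrDr; apply: lerD; last first.
  by apply: IH => AU' AUL; apply: Lm; rewrite in_cons AUL orbT.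
have -> : \sum_(x : 'I_c) (if fresh x AU then Q (AU.1 :: B) - Q B else 0)
          = \sum_(x in ~: AU.2) (Q (AU.1 :: B) - Q B).
  by rewrite [RHS]big_mkcond; apply: eq_bigr => x _; rewrite finset.in_setC.
have card_fresh : #|~: AU.2| = (c - #|AU.2|)%N.
  by rewrite cardsCs finset.setCK card_ord.
rewrite sumr_const -[_ *+ #|_|]mulr_natl mulrA card_fresh; apply: ler_wpM2r.
  by rewrite subr_ge0; apply: Pcover_mono => w wB; rewrite covers_cons wB orbT.
by apply: p_le_fresh; apply: Lm; rewrite mem_head.
Qed.
End Gain.

Lemma has_filter_predI (U : Type) (a b : pred U) s :
  has a (seq.filter b s) = has (predI a b) s.
Proof. by elim: s => //= x s IH; case: (b x); rewrite /= IH //; case: (a x). Qed.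

Lemma covers_split (e : T) F w :
  covers (map fst F) w = covers (map fst [seq AU : pair <- F | e \notin AU.1]) w ||
    has (fun AU : pair => [forall y in AU.1, w y]) [seq AU : pair <- F | e \in AU.1].
Proof.
have permF := introT permPl (perm_filterC (fun AU : pair => e \notin AU.1) F).
rewrite /covers !has_map -[in LHS](perm_has _ permF) has_cat; congr (_ || _).
by rewrite !has_filter_predI; apply: eq_has => AU /=; rewrite negbK.
Qed.

Lemma covers_local l B (w w' : {ffun T -> bool}) :
  (forall A, A \in B -> A \subset [set y in l]) -> {in l, w =1 w'} ->
  covers B w = covers B w'.
Proof.
move=> Bl ww'; apply: eq_in_has => A /Bl /fintype.subsetP Al.
by apply: eq_forallb_in => y /Al; rewrite inE => /ww' ->.
Qed.

Lemma Pcover_local l g g' B : (forall A, A \in B -> A \subset [set y in l]) ->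
  Pcover l g B = Pcover l g' B.
Proof.
by move=> Bl; apply: expect_eq_start => w w' ww' _ _; rewrite (covers_local Bl ww').
Qed.

Lemma rainbow_on_ext (e : T) (x : 'I_c) A U (w : {ffun T -> option 'I_c}) :
  e \in A -> x \notin U -> w e = Some x ->
  rainbow_on (A :\ e, x |: U) w -> rainbow_on (A, U) w.
Proof.
move=> eA xU we /andP[/forallP fresh_col /forallP distinct]; apply/andP; split;
  apply/forallP => y; apply/implyP => /= yA.
  have [->|ye] := eqVneq y e; first by rewrite we.
  have := fresh_col y; rewrite /= in_setD1 ye yA /=.
  by case: (w y) => // z; rewrite in_setU1 negb_or => /andP[_ ->].
apply/forallP => y2; apply/implyP => y2A; apply/implyP => /eqP wy.
have [ye|ye] := eqVneq y e; have [y2e|y2e] := eqVneq y2 e.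
- by rewrite ye y2e.
- by have := fresh_col y2; rewrite /= in_setD1 y2e y2A /= -wy ye we in_setU1 eqxx.
- by have := fresh_col y; rewrite /= in_setD1 ye yA /= wy y2e we in_setU1 eqxx.
- have := distinct y; rewrite /= in_setD1 ye yA /= => /forallP /(_ y2).
  by rewrite in_setD1 y2e y2A wy eqxx.
Qed.

(* A demand [AU] still needs the [#|AU.1|] edges of [AU.1] and has spent the
   [#|AU.2|] colours of [AU.2]; bounding the sum by [m] leaves every demand
   that is still open at least [c - m + 1] fresh colours. *)
Definition family_ok l F := forall AU, AU \in F ->
  (AU.1 \subset [set y in l]) && (#|AU.1| + #|AU.2| <= m)%N.

Definition branch (e : T) F (x : 'I_c) : seq pair :=
  [seq AU : pair <- F | e \notin AU.1] ++
  [seq (AU.1 :\ e, x |: AU.2) | AU : pair <- F & (e \in AU.1) && (x \notin AU.2)].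

Lemma coupling_nil gb gc F : family_ok [::] F ->
  Pcover [::] gb (map fst F) <= Prainbow [::] gc F.
Proof.
move=> F_ok; apply: ler_nat_bool; rewrite /covers has_map => /hasP[AU AUF _].
apply/hasP; exists AU => //; have /andP[/fintype.subsetP AU_nil _] := F_ok AU AUF.
by apply/andP; split; apply/forallP => y; apply/implyP => /AU_nil; rewrite inE.
Qed.

Section Step.
Variables (e : T) (l : seq T) (F : seq pair).
Hypotheses (e_notin_l : e \notin l) (F_ok : family_ok (e :: l) F).
Hypothesis IH : forall gb gc F',
  family_ok l F' -> Pcover l gb (map fst F') <= Prainbow l gc F'.

Let F0 := [seq AU : pair <- F | e \notin AU.1].
Let B := map fst F0.
Let L := [seq (AU.1 :\ e, AU.2) | AU : pair <- F & e \in AU.1].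

Lemma subset_behead A : A \subset [set y in e :: l] -> e \notin A ->
  A \subset [set y in l].
Proof.
move=> /fintype.subsetP Ael eA; apply/fintype.subsetP => y yA.
by have := Ael y yA; rewrite !inE => /orP[/eqP ye|//]; rewrite -ye yA in eA.
Qed.

Lemma subset_behead_setD1 A : A \subset [set y in e :: l] -> A :\ e \subset [set y in l].
Proof.
by move=> Ael; rewrite subset_behead ?setD11 // (fintype.subset_trans (subD1set A e) Ael).
Qed.

Lemma family_ok_F0 : family_ok l F0.
Proof.
move=> AU; rewrite mem_filter => /andP[eA /F_ok /andP[AUel ->]].
by rewrite andbT subset_behead.
Qed.

Lemma F0_local A : A \in B -> A \subset [set y in l].
Proof. by move=> /mapP[AU /family_ok_F0 /andP[AUl _] ->]. Qed.

Lemma L_local AU : AU \in L -> AU.1 \subset [set y in l].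
Proof.
move=> /mapP[AU0]; rewrite mem_filter => /andP[_ /F_ok /andP[AU0el _]] ->.
exact: subset_behead_setD1.
Qed.

Lemma L_spent AU : AU \in L -> (#|AU.2| < m)%N.
Proof.
move=> /mapP[AU0]; rewrite mem_filter => /andP[eA /F_ok /andP[_ AU0m]] -> /=.
by move: AU0m; rewrite (cardsD1 e AU0.1) eA /=; lia.
Qed.

Lemma family_ok_branch x : family_ok l (branch e F x).
Proof.
move=> AU; rewrite mem_cat => /orP[/family_ok_F0 //|].
move=> /mapP[AU0]; rewrite mem_filter => /andP[/andP[eA xU] /F_ok /andP[AU0el]] + -> /=.
rewrite subset_behead_setD1 // (cardsD1 e AU0.1) eA cardsU1 xU /=; lia.
Qed.

Lemma Pcover_step gb : Pcover (e :: l) gb (map fst F) =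
  (1 - p) * Pcover l gb B + p * Pcover l gb (extend predT B L).
Proof.
rewrite /Pcover /= big_bool /= addrC; congr (_ * _ + _ * _).
  rewrite (eq_expect pbin (f' := fun w => (covers B w)%:R)).
    exact: Pcover_local F0_local.
  move=> w wg; have we : w e = false by rewrite wg // ffunE eqxx.
  rewrite (covers_split e) -/F0 -/B; case: hasP => [[AU] | _]; last by rewrite orbF.
  by rewrite mem_filter => /andP[eA _] /forallP /(_ e); rewrite eA we.
rewrite (eq_expect pbin (f' := fun w => (covers (extend predT B L) w)%:R)).
  by apply: Pcover_local; apply: extend_sub F0_local L_local.
move=> w wg; have we : w e = true by rewrite wg // ffunE eqxx.
rewrite (covers_split e) covers_extend; congr ((_ || _)%:R).
rewrite /L has_map; apply: eq_in_has => AU; rewrite mem_filter => /andP[eA _] /=.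
apply/forallP/forallP => full y; apply/implyP => yA.
  by move: yA; rewrite in_setD1 => /andP[_ yA]; have := full y; rewrite yA.
have [->|ye] := eqVneq y e; first by rewrite we.
by have := full y; rewrite in_setD1 ye yA.
Qed.

Lemma Prainbow_none gb gc : Pcover l gb B <= Prainbow l (fupd gc e None) F.
Proof.
apply: le_trans (IH gb (fupd gc e None) family_ok_F0) _.
apply: ler_expect => [|w _]; first exact: pcol_ge0.
apply: ler_nat_bool => /hasP[AU]; rewrite mem_filter => /andP[_ AUF] rainbow.
by apply/hasP; exists AU.
Qed.

(* Colour [x] at [e] serves exactly the demands [AU] for which [x] is fresh. *)
Lemma Prainbow_some gb gc x :
  Pcover l gb B + gain l gb (fresh x) B L <= Prainbow l (fupd gc e (Some x)) F.
Proof.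
apply: le_trans (gain_extend l gb (fresh x) B L) _.
have -> : Pcover l gb (extend (fresh x) B L) = Pcover l gb (map fst (branch e F x)).
  apply: eq_expect => w _; congr (_%:R).
  rewrite covers_extend /branch map_cat /covers has_cat; congr (_ || _).
  rewrite /L !has_map !has_filter_predI; apply: eq_has => AU /=; rewrite /fresh /=.
  by case: (e \in AU.1); case: (x \notin AU.2); rewrite /= ?andbF ?andbT.
apply: le_trans (IH gb (fupd gc e (Some x)) (family_ok_branch (x := x))) _.
apply: ler_expect => [|w wg]; first exact: pcol_ge0.
have we : w e = Some x by rewrite wg // ffunE eqxx.
apply: ler_nat_bool; rewrite /rainbow_covers has_cat => /orP[] /hasP[AU].
  by rewrite mem_filter => /andP[_ AUF] rainbow; apply/hasP; exists AU.
move=> /mapP[[A U]]; rewrite mem_filter => /andP[/andP[eA xU] AUF] -> rainbow.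
by apply/hasP; exists (A, U) => //; apply: rainbow_on_ext rainbow.
Qed.

Lemma coupling_step gb gc : Pcover (e :: l) gb (map fst F) <= Prainbow (e :: l) gc F.
Proof.
rewrite Pcover_step Pcover_extendT /Prainbow /= sum_option.
set a := Pcover l gb B.
apply: le_trans
  (_ : (1 - q) * a + \sum_(x : 'I_c) q / c%:R * (a + gain l gb (fresh x) B L) <= _).
  rewrite -mulr_sumr big_split /= sumr_const card_ord -[a *+ _]mulr_natl.
  rewrite [q / _ * (_ + _)]mulrDr mulrA [_ * c%:R]mulrC colour_total.
  have -> : (1 - p) * a + p * (a + gain l gb predT B L) =
            (1 - q) * a + (q * a + p * gain l gb predT B L) by ring.
  by rewrite !lerD2l; apply: gain_split L_spent.
apply: lerD; first by apply: ler_wpM2l; [rewrite subr_ge0 | apply: Prainbow_none].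
by apply: ler_sum => x _; apply: ler_wpM2l; [apply: divr_ge0 | apply: Prainbow_some].
Qed.

End Step.

Lemma coupling l gb gc F : uniq l -> family_ok l F ->
  Pcover l gb (map fst F) <= Prainbow l gc F.
Proof.
elim: l gb gc F => [|e l IH] gb gc F; first by move=> _; apply: coupling_nil.
by case/andP=> el ul F_ok; apply: coupling_step el F_ok _ gb gc => gb' gc' F'; apply: IH.
Qed.

End Coupling.

Lemma binom_prob_expect (R : realType) n k (p : R) (P : {set {set 'I_n}} -> bool) :
  binom_prob k p P = expect (pbin p) (enum (ksets n k)) [ffun _ => false]
                        (fun w => (P (finset w))%:R).
Proof.
rewrite expectE ?enum_uniq // /binom_prob big_mkcondr /=.
rewrite (reindex (fun H : {set {set 'I_n}} => [ffun y => y \in H])) /=; last first.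
  by exists (fun w : {ffun {set 'I_n} -> bool} => finset w) => [H _|w _];
     [apply/setP => y; rewrite inE ffunE | apply/ffunP => y; rewrite ffunE inE].
apply: eq_big => [H|H Hk].
  apply/fintype.subsetP/forallP => [Hk y|Hk y yH].
    apply/implyP; rewrite mem_enum !ffunE => yk.
    by rewrite eqbF_neg; apply: contraNN yk => /Hk.
  by have := Hk y; rewrite mem_enum !ffunE yH /=; case: (y \in ksets n k).
have -> : finset [ffun y => y \in H] = H by apply/setP => y; rewrite inE ffunE.
rewrite big_enum /= (big_setID H) /=.
rewrite (eq_bigr (fun _ => p)); last by move=> y; rewrite inE ffunE => /andP[_ ->].
rewrite [X in _ = _ * X * _](eq_bigr (fun _ => 1 - p)); last first.
  by move=> y; rewrite inE ffunE => /andP[/negbTE -> _].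
rewrite !prodr_const (finset.setIidPr Hk) cardsD (finset.setIidPr Hk).
by case: (P H); rewrite ?mulr1 ?mulr0.
Qed.

Lemma colored_prob_expect (R : realType) n k c (q : R) (P : colored_outcome n c -> bool) :
  colored_prob k q P = expect (pcol (c := c) q) (enum (ksets n k)) [ffun _ => None]
                         (fun w => (P w)%:R).
Proof.
rewrite expectE ?enum_uniq // /colored_prob big_mkcondr /=.
apply: eq_big => [w|w _]; first by apply: eq_forallb => y; rewrite mem_enum ffunE.
by rewrite big_enum /=; case: (P w); rewrite ?mulr1 ?mulr0.
Qed.

Section Copies.
Variables (n c : nat) (S : {set {set 'I_n}}).

Definition copies : seq ({set {set 'I_n}} * {set 'I_c}) :=
  [seq ([set f @: e | e : {set 'I_n} in S], finset.set0)
  | f : {perm 'I_n} <- enum {perm 'I_n}].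

Lemma family_ok_copies k : uniform k S -> family_ok #|S| (enum (ksets n k)) copies.
Proof.
move=> Sk AU /mapP[f _ ->] /=; rewrite cards0 addn0 leq_imset_card andbT.
apply/fintype.subsetP => _ /imsetP[e eS ->]; rewrite inE mem_enum.
by have := fintype.subsetP Sk e eS; rewrite !inE card_imset //; apply: perm_inj.
Qed.

Lemma covers_copies (w : {ffun {set 'I_n} -> bool}) :
  has_copy S (finset w) -> covers (map fst copies) w.
Proof.
move=> /existsP[f /forallP copy_f]; apply/hasP.
exists [set f @: e | e : {set 'I_n} in S].
  by apply/mapP; exists ([set f @: e | e : {set 'I_n} in S], finset.set0);
    rewrite // map_f ?mem_enum.
by apply/forallP => y; apply/implyP => /imsetP[e eS ->]; have := copy_f e; rewrite eS inE.
Qed.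

Lemma has_rainbow_copy_copies (w : colored_outcome n c) :
  rainbow_covers copies w -> has_rainbow_copy S w.
Proof.
move=> /hasP[AU /mapP[f _ ->] /andP[/forallP coloured /forallP distinct]].
apply/existsP; exists f; apply/andP; split.
  apply/forallP => e; apply/implyP => eS; have := coloured (f @: e).
  by rewrite /= imset_f //; case: (w _).
apply/forallP => e1; apply/implyP => e1S; apply/forallP => e2; apply/implyP => e2S.
apply/implyP => same_col; have := distinct (f @: e1); rewrite /= imset_f //.
move=> /forallP /(_ (f @: e2)); rewrite imset_f // same_col /= => /eqP.
by move=> /(imset_inj (@perm_inj _ f)) ->.
Qed.

End Copies.

Lemma binom_copy_le_rainbow (R : realType) n k c (S : {set {set 'I_n}}) (p q : R) :
  uniform k S -> 0 <= p <= 1 -> 0 <= q <= 1 -> c%:R * (q / c%:R) = q ->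
  (forall j, (j < #|S|)%N -> p <= q / c%:R * (c - j)%:R) ->
  binom_prob k p (has_copy S) <= colored_prob k q (@has_rainbow_copy n c S).
Proof.
move=> Sk /andP[p_ge0 p_le1] /andP[q_ge0 q_le1] colour_total p_le_fresh.
rewrite binom_prob_expect colored_prob_expect.
have cpl := coupling p_ge0 p_le1 q_ge0 q_le1 colour_total p_le_fresh
  [ffun _ => false] [ffun _ => None] (enum_uniq _) (family_ok_copies (c := c) Sk).
apply: le_trans (le_trans _ cpl) _.
  apply: ler_expect => [|w _]; first exact: pbin_ge0.
  exact/ler_nat_bool/covers_copies.
apply: ler_expect => [|w _]; first exact: pcol_ge0.
exact/ler_nat_bool/has_rainbow_copy_copies.
Qed.

Lemma colored_prob_le1 (R : realType) n k c (q : R) (P : colored_outcome n c -> bool) :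
  0 <= q <= 1 -> c%:R * (q / c%:R) = q -> colored_prob k q P <= 1.
Proof.
move=> /andP[q_ge0 q_le1] colour_total; rewrite colored_prob_expect.
apply: le_trans
  (_ : _ <= expect (pcol q) (enum (ksets n k)) [ffun _ => None] (fun _ => 1)) _.
  apply: ler_expect => [|w _]; first exact: pcol_ge0.
  by case: (P w); rewrite ?ler01.
rewrite expect1 // sum_option /= sumr_const card_ord -[_ *+ c]mulr_natl colour_total.
by rewrite subrK.
Qed.

Lemma rainbow_parameters (R : realFieldType) (m c : nat) (p eps : R) :
  0 <= p -> 0 <= eps -> c%:R = (1 + eps) * m%:R ->
  let q := c%:R * p / (eps * m%:R + 1) in
  [/\ 0 <= q, c%:R * (q / c%:R) = q & forall j, (j < m)%N -> p <= q / c%:R * (c - j)%:R].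
Proof.
move=> p_ge0 eps_ge0 c_def q; set d := eps * m%:R + 1 in q *.
have epsm_ge0 : 0 <= eps * m%:R by rewrite mulr_ge0.
have d_gt0 : 0 < d by rewrite /d; lra.
have m_le_c : (m <= c)%N by rewrite -(ler_nat R) c_def mulrDl mul1r lerDl.
split; first by rewrite divr_ge0 ?mulr_ge0 // ltW.
  have [c0|c_neq0] := eqVneq c 0%N; first by rewrite /q c0 !mul0r.
  by rewrite mulrC divfK // pnatr_eq0.
move=> j j_lt_m; have c_neq0 : c%:R != 0 :> R by rewrite pnatr_eq0; lia.
have -> : q / c%:R = p / d by rewrite /q mulrAC [c%:R * p / c%:R]mulrAC mulfV // mul1r.
have j_lt_m' : j%:R + 1 <= m%:R :> R by rewrite natr1 ler_nat.
rewrite natrB; last by lia.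
rewrite -[X in X <= _](divfK (lt0r_neq0 d_gt0) p).
apply: ler_wpM2l; first by rewrite divr_ge0 // ltW.
by rewrite /d c_def mulrDl mul1r; lra.
Qed.

Theorem theorem6 (R : realType) (k : nat) (S : forall n : nat, {set {set 'I_n}})
    (p : nat -> R) (eps : nat -> R) (c : nat -> nat) :
  (forall n, uniform k (S n)) ->
  (forall n, 0 <= p n <= 1) ->
  (fun n => binom_prob k (p n) (has_copy (S n))) @ \oo --> (1 : R) ->
  (forall n, 0 <= eps n) ->
  (forall n, ((c n)%:R : R) = (1 + eps n) * (#|S n|)%:R) ->
  (\forall n \near \oo,
      (c n)%:R * p n / (eps n * (#|S n|)%:R + 1) <= (1 : R)) ->
  (fun n => colored_prob k ((c n)%:R * p n / (eps n * (#|S n|)%:R + 1))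
                         (@has_rainbow_copy n (c n) (S n)))
    @ \oo --> (1 : R).
Proof.
move=> Sk p01 binom_cvg eps_ge0 c_def q_le1.
apply: (squeeze_cvgr _ binom_cvg (cvg_cst (1 : R))).
apply: filterS q_le1 => n q_le1; have /andP[p_ge0 _] := p01 n.
have [q_ge0 colour_total p_le_fresh] := rainbow_parameters p_ge0 (eps_ge0 n) (c_def n).
have q01 : 0 <= (c n)%:R * p n / (eps n * #|S n|%:R + 1) <= 1 by rewrite q_ge0.
apply/andP; split; last exact: colored_prob_le1.
exact: binom_copy_le_rainbow.
Qed.
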